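(* Let $n\ge 2$ and $\delta=\sigma_{n-1}\cdots\sigma_1\in B_n$. Then $\#(USS(\delta))=2^{n-2}$.
   Context: $B_n$ is Artin's braid group with generators $\sigma_1,\ldots,\sigma_{n-1}$, with its classical Garside structure (positive monoid generated by the $\sigma_i$, Garside element $\Delta=\sigma_1(\sigma_2\sigma_1)\cdots(\sigma_{n-1}\cdots\sigma_1)$). Every braid has a unique left normal form $Y=\Delta^p y_1\cdots y_r$ ($p$ maximal, each $y_i\neq 1,\Delta$ a simple braid, i.e. a positive prefix of $\Delta$, and the maximal simple prefix of $y_i\cdots y_r$); $\ell(Y)=r$ is the canonical length. With $\tau(Z)=\Delta^{-1}Z\Delta$, the cycling is $\mathbf c(Y)=\Delta^p y_2\cdots y_r\tau^{-p}(y_1)$. The ultra summit set $USS(X)$ is the set of conjugates $Y$ of $X$ with $\ell(Y)$ minimal in the conjugacy class and $\mathbf c^m(Y)=Y$ for some $m\ge1$. *)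

(* Artin braid group B_n given by its standard presentation,
   elements represented by words modulo the congruence generated by the relations. *)
From mathcomp Require Import all_boot all_order all_algebra.
Set Implicit Arguments. Unset Strict Implicit. Unset Printing Implicit Defensive.
Import Order.TTheory GRing.Theory Num.Theory.

(* A letter (i, true) is sigma_i, (i, false) is sigma_i^{-1}. *)
Definition word := seq (nat * bool).

Definition valid (n : nat) (w : word) : bool :=
  all (fun l => (1 <= l.1) && (l.1 <= n.-1)) w.

Definition winv (w : word) : word := rev (map (fun l => (l.1, ~~ l.2)) w).

Inductive beq (n : nat) : word -> word -> Prop :=
| beq_refl w : beq n w w
| beq_sym u v : beq n u v -> beq n v u
| beq_trans u v w : beq n u v -> beq n v w -> beq n u w
| beq_ctx a b u v : beq n u v -> beq n (a ++ u ++ b) (a ++ v ++ b)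
| beq_cancel i b : 1 <= i -> i <= n.-1 -> beq n [:: (i, b); (i, ~~ b)] [::]
| beq_comm i j : 1 <= i -> i <= n.-1 -> 1 <= j -> j <= n.-1 -> (i.+1 < j) || (j.+1 < i) ->
    beq n [:: (i, true); (j, true)] [:: (j, true); (i, true)]
| beq_braid i : 1 <= i -> i.+1 <= n.-1 ->
    beq n [:: (i, true); (i.+1, true); (i, true)] [:: (i.+1, true); (i, true); (i.+1, true)].

(* Garside element Delta = s1 (s2 s1) ... (s_{n-1} ... s1). *)
Definition Delta (n : nat) : word :=
  flatten [seq [seq (j.+1, true) | j <- rev (iota 0 k)] | k <- iota 1 n.-1].

Definition Deltapow (n : nat) (p : int) : word :=
  match p with
  | Posz k => flatten (nseq k (Delta n))
  | Negz k => flatten (nseq k.+1 (winv (Delta n)))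
  end.

Definition positive (n : nat) (w : word) : Prop :=
  exists u, valid n u /\ all (fun l => l.2) u /\ beq n w u.

Definition prefix (n : nat) (a b : word) : Prop := positive n (winv a ++ b).

Definition simple (n : nat) (s : word) : Prop :=
  valid n s /\ positive n s /\ prefix n s (Delta n).

Definition NF (n : nat) (Y : word) (p : int) (ys : seq word) : Prop :=
  beq n Y (Deltapow n p ++ flatten ys) /\
  (forall q : int, positive n (Deltapow n (- q)%R ++ Y) -> (q <= p)%R) /\
  (forall y, y \in ys -> simple n y /\ ~ beq n y [::] /\ ~ beq n y (Delta n)) /\
  (forall i, i < size ys ->
     forall t, simple n t -> prefix n t (flatten (drop i ys)) ->
       prefix n t (nth [::] ys i)).

Definition canlen (n : nat) (Y : word) (r : nat) : Prop :=
  exists p ys, NF n Y p ys /\ size ys = r.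

(* cycling; convention c(Delta^p) = Delta^p when r = 0.
   tau^{-p}(y) = Delta^p y Delta^{-p}. *)
Definition cyc (n : nat) (Y Z : word) : Prop :=
  exists p ys, NF n Y p ys /\
    match ys with
    | [::] => beq n Z Y
    | y1 :: rest =>
        beq n Z (Deltapow n p ++ flatten rest ++ Deltapow n p ++ y1 ++ Deltapow n (- p)%R)
    end.

Fixpoint cyc_iter (n m : nat) (Y Z : word) : Prop :=
  match m with
  | 0 => beq n Y Z
  | m'.+1 => exists W, valid n W /\ cyc n Y W /\ cyc_iter n m' W Z
  end.

Definition conjugate (n : nat) (X Y : word) : Prop :=
  exists w, valid n w /\ beq n Y (winv w ++ X ++ w).

Definition USS (n : nat) (X Y : word) : Prop :=
  valid n Y /\ conjugate n X Y /\
  (forall Z r r', valid n Z -> conjugate n X Z -> canlen n Y r -> canlen n Z r' -> r <= r') /\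
  (exists m, 0 < m /\ cyc_iter n m Y Y).

Definition card_Bn (n : nat) (P : word -> Prop) (N : nat) : Prop :=
  exists L : seq word, size L = N /\
    (forall i, i < N -> valid n (nth [::] L i) /\ P (nth [::] L i)) /\
    (forall i j, i < N -> j < N -> beq n (nth [::] L i) (nth [::] L j) -> i = j) /\
    (forall Y, valid n Y -> P Y -> exists i, i < N /\ beq n Y (nth [::] L i)).

Definition delta (n : nat) : word := [seq (i, true) | i <- rev (iota 1 n.-1)].

From Pilot Require Import Defs.
From mathcomp Require Import all_boot all_order all_algebra.
From mathcomp Require Import zify.
From Stdlib Require Import Setoid Morphisms.
Import Order.TTheory GRing.Theory Num.Theory.
Set Implicit Arguments. Unset Strict Implicit.

(* A Coxeter word, a product of sigma_1, ..., sigma_(n-1) in which every letter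
   occurs once, is a simple braid; for n >= 3 it is neither 1 nor Delta, so its
   normal form has one factor and it is fixed by cycling.  All Coxeter words are
   conjugate to delta by cyclic rotations, and no conjugate of delta has canonical
   length 0 since its exponent sum n - 1 is not a multiple of |Delta| >= n.
   Conversely an element of USS(delta) has canonical length <= 1 and exponent sum
   n - 1, so it is a positive word of length n - 1; as the permutation of delta is
   an n-cycle, every generator occurs in it, hence exactly once: it is a Coxeter
   word.  Coxeter words are determined by the relative order of sigma_(k-1) and
   sigma_k for 2 <= k <= n - 1, which the permutation of the braid detects. *)

#[export] Hint Resolve beq_refl : core.

#[export] Instance beq_equiv n : Equivalence (beq n).
Proof. split; [exact: beq_refl | exact: beq_sym | exact: beq_trans]. Qed.

#[export] Instance beq_cat n : Proper (beq n ==> beq n ==> beq n) (@cat (nat * bool)).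
Proof.
move=> a a' Ha b b' Hb; apply: (beq_trans (v := a' ++ b)).
  exact: (beq_ctx [::] b Ha).
by have := beq_ctx a' [::] Hb; rewrite !cats0.
Qed.

Lemma beq_catl n a u v : beq n u v -> beq n (a ++ u) (a ++ v).
Proof. by move=> H; apply: beq_cat. Qed.

#[export] Instance beq_cons n l : Proper (beq n ==> beq n) (cons l).
Proof. by move=> a b H; apply: (beq_cat (beq_refl n [:: l]) H). Qed.

#[export] Instance positive_beq n : Proper (beq n ==> iff) (positive n).
Proof.
move=> a b H; split=> -[u [Vu [Pu Hu]]]; exists u; [by rewrite -H | by rewrite H].
Qed.

Lemma valid_cons n l u : valid n (l :: u) = (0 < l.1 <= n.-1) && valid n u.
Proof. by []. Qed.

Lemma valid_cat n u v : valid n (u ++ v) = valid n u && valid n v.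
Proof. exact: all_cat. Qed.

Lemma winv_cat u v : winv (u ++ v) = winv v ++ winv u.
Proof. by rewrite /winv map_cat rev_cat. Qed.

Lemma winv_cons l u : winv (l :: u) = winv u ++ [:: (l.1, ~~ l.2)].
Proof. by rewrite /winv /= rev_cons cats1. Qed.

Lemma valid_winv n w : valid n (winv w) = valid n w.
Proof. by rewrite /valid /winv all_rev all_map. Qed.

Lemma beq_catVw n w : valid n w -> beq n (winv w ++ w) [::].
Proof.
elim: w => [|[i b] w IH] //; rewrite valid_cons => /andP [/andP [Hi1 Hi2] Vw].
rewrite winv_cons -catA /=.
have := beq_ctx [::] w (beq_cancel (~~ b) Hi1 Hi2); rewrite negbK /= => ->.
exact: IH.
Qed.

Lemma beq_catwV n w : valid n w -> beq n (w ++ winv w) [::].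
Proof.
elim: w => [|[i b] w IH] //; rewrite valid_cons => /andP [/andP [Hi1 Hi2] Vw].
by rewrite winv_cons catA /= (IH Vw); apply: beq_cancel.
Qed.

Lemma beq_cat2l n u a b : valid n u -> beq n (u ++ a) (u ++ b) -> beq n a b.
Proof.
move=> Vu H; have E c : beq n c (winv u ++ u ++ c) by rewrite catA beq_catVw.
by rewrite (E a) H -E.
Qed.

(** * Invariants of braids *)

Definition letter_sign (l : nat * bool) : int := if l.2 then 1%R else (-1)%R.

Fixpoint expsum (w : word) : int :=
  if w is l :: w' then (letter_sign l + expsum w')%R else 0%R.

Lemma expsum_cat u v : expsum (u ++ v) = (expsum u + expsum v)%R.
Proof. by elim: u => [|l u IH] /=; rewrite ?add0r // IH addrA. Qed.

#[export] Instance beq_expsum n : Proper (beq n ==> eq) expsum.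
Proof.
move=> u v; elim=> {u v} //= [u v w _ -> _ -> | a b u v _ IH | i [] _ _] //.
by rewrite !expsum_cat IH.
Qed.

Lemma expsum_winv w : expsum (winv w) = (- expsum w)%R.
Proof.
elim: w => [|[i b] w IH] //; rewrite winv_cons expsum_cat IH /= /letter_sign /=.
by case: b => /=; lia.
Qed.

Lemma expsum_positive u : all (fun l => l.2) u -> expsum u = Posz (size u).
Proof. by elim: u => [|[i b] u IH] //= /andP [/= -> /IH ->]; rewrite /letter_sign /=; lia. Qed.

Lemma positive_expsum_ge0 n w : positive n w -> (0 <= expsum w)%R.
Proof. by move=> [u [_ [Pu Hu]]]; rewrite Hu expsum_positive. Qed.

Lemma positive_expsum0 n w : positive n w -> expsum w = 0%R -> beq n w [::].
Proof.
by move=> [u [_ [Pu Hu]]]; rewrite Hu expsum_positive //; case: u {Hu Pu}.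
Qed.

(* [wperm w x] is the end position of the strand of [w] starting at [x]. *)
Definition swap (j x : nat) : nat :=
  if x == j then j.+1 else if x == j.+1 then j else x.

Definition wperm (w : word) (x : nat) : nat := foldl (fun y l => swap l.1 y) x w.

Lemma wperm_cat u v x : wperm (u ++ v) x = wperm v (wperm u x).
Proof. exact: foldl_cat. Qed.

Lemma wperm_cons l u x : wperm (l :: u) x = wperm u (swap l.1 x).
Proof. by []. Qed.

Ltac swap_cases := rewrite /swap;
  repeat (match goal with |- context [?a == ?b] =>
    lazymatch a with context [if _ then _ else _] => fail | _ =>
    lazymatch b with context [if _ then _ else _] => fail | _ =>
      case: (@eqP nat a b) => ? end end end; simpl); lia.

Lemma beq_wperm n u v : beq n u v -> wperm u =1 wperm v.
Proof.
elim=> {u v} [w|u v _ IH|u v w _ IH1 _ IH2|a b u v _ IH|i b _ _|i j _ _ _ _ Hij|i _ _]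
  x //=.
- by rewrite IH1 IH2.
- by rewrite !wperm_cat IH.
- by rewrite /wperm /=; swap_cases.
- by rewrite /wperm /=; move: Hij; swap_cases.
- by rewrite /wperm /=; swap_cases.
Qed.

Lemma wperm_range n w x : valid n w -> 0 < x <= n -> 0 < wperm w x <= n.
Proof.
elim: w x => [|l w IH] x //; rewrite valid_cons => /andP [Hl Vw] Hx.
by rewrite wperm_cons; apply: IH => //; move: Hl Hx; set i := l.1; swap_cases.
Qed.

Lemma wperm_avoid j u x :
  all (fun l => (0 < l.1) && (l.1 != j)) u -> 0 < x <= j -> 0 < wperm u x <= j.
Proof.
elim: u x => [|l u IH] x //= /andP [Hl Hu] Hx.
by apply: IH => //; move: Hl Hx; set i := l.1; swap_cases.
Qed.

(** * Positive words and the Garside element *)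

Definition pos_word (m : nat) (w : word) : bool := all (fun l => l.2 && (0 < l.1 <= m)) w.

Lemma pos_word_cat m u v : pos_word m (u ++ v) = pos_word m u && pos_word m v.
Proof. exact: all_cat. Qed.

Lemma pos_word_cons m l u : pos_word m (l :: u) = [&& l.2, 0 < l.1 <= m & pos_word m u].
Proof. by rewrite /pos_word /= -andbA. Qed.

Lemma pos_word_mono a b w : a <= b -> pos_word a w -> pos_word b w.
Proof.
move=> Hab; apply: sub_all => l /and3P [-> -> Hl] /=; exact: leq_trans Hab.
Qed.

Lemma pos_word_valid n m w : m <= n.-1 -> pos_word m w -> valid n w.
Proof.
move=> Hm; apply: sub_all => l /and3P [_ -> Hl] /=; exact: leq_trans Hm.
Qed.

Lemma pos_word_positive m w : pos_word m w -> all (fun l => l.2) w.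
Proof. by apply: sub_all => l /andP []. Qed.

Lemma beq_far_comm n i lo hi w :
  0 < i <= n.-1 -> 0 < lo -> hi <= n.-1 -> (hi.+2 <= i) || (i.+2 <= lo) ->
  all (fun l => l.2 && (lo <= l.1 <= hi)) w ->
  beq n ((i, true) :: w) (w ++ [:: (i, true)]).
Proof.
move=> Hi Hlo Hhi Hsep; elim: w => //= [[j b] w] IH /andP [/andP [/= -> Hj] Hw].
have := beq_ctx [::] w (@beq_comm n i j _ _ _ _ _); rewrite /= => -> //; try lia.
by rewrite (IH Hw).
Qed.

Lemma beq_far_comm_low n i m w : 0 < i <= n.-1 -> m.+2 <= i -> pos_word m w ->
  beq n ((i, true) :: w) (w ++ [:: (i, true)]).
Proof. by move=> Hi Him Hw; apply: (@beq_far_comm n i 1 m) => //; rewrite ?Him //; lia. Qed.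

Definition dec_word (k : nat) : word := [seq (i, true) | i <- rev (iota 1 k)].
Definition inc_word (k : nat) : word := [seq (i, true) | i <- iota 1 k].

Arguments Delta : simpl never.
Arguments dec_word : simpl never.
Arguments inc_word : simpl never.

Lemma iota1S k : iota 1 k.+1 = rcons (iota 1 k) k.+1.
Proof. by rewrite -cats1 -[k.+1]addn1 iotaD add1n addn1. Qed.

Lemma dec_wordS k : dec_word k.+1 = (k.+1, true) :: dec_word k.
Proof. by rewrite /dec_word iota1S rev_rcons. Qed.

Lemma inc_wordS k : inc_word k.+1 = inc_word k ++ [:: (k.+1, true)].
Proof. by rewrite /inc_word iota1S map_rcons cats1. Qed.

Lemma size_dec_word k : size (dec_word k) = k.
Proof. by rewrite size_map size_rev size_iota. Qed.

Lemma pos_word_dec k : pos_word k (dec_word k).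
Proof.
by elim: k => // k IH; rewrite dec_wordS pos_word_cons /= leqnn (pos_word_mono _ IH).
Qed.

Lemma pos_word_inc k : pos_word k (inc_word k).
Proof.
by elim: k => // k IH; rewrite inc_wordS pos_word_cat /= leqnn (pos_word_mono _ IH).
Qed.

Lemma DeltaS k : Delta k.+1 = Delta k ++ dec_word k.
Proof.
rewrite /Delta; case: k => [|k] //; rewrite !succnK.
rewrite iota1S -cats1 map_cat flatten_cat /= cats0; congr (_ ++ _).
rewrite /dec_word.
have -> : iota 1 k.+1 = map succn (iota 0 k.+1) by rewrite -(iotaDl 1).
by rewrite -map_rev -map_comp.
Qed.

Lemma pos_word_Delta k : pos_word k.-1 (Delta k).
Proof.
elim: k => [|k IH] //; rewrite DeltaS pos_word_cat pos_word_dec andbT.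
by case: k IH => // k; apply: pos_word_mono.
Qed.

Lemma dec_word_shift n j k : 0 < j < k -> k <= n.-1 ->
  beq n ((j, true) :: dec_word k) (dec_word k ++ [:: (j.+1, true)]).
Proof.
elim: k => [|k IH] /andP [Hj Hjk] Hk //; rewrite dec_wordS.
case: (ltngtP j k) => [Hlt|Hgt|Ejk]; [|lia|].
  have := beq_ctx [::] (dec_word k) (@beq_comm n j k.+1 _ _ _ _ _); rewrite /= => -> //; try lia.
  by apply: (beq_cons _ _); apply: IH; lia.
subst k; case: j Hj IH Hjk Hk => // j _ _ _ Hk; rewrite dec_wordS.
have := beq_ctx [::] (dec_word j) (@beq_braid n j.+1 _ _); rewrite /= => -> //; try lia.
do 2 apply: (beq_cons _ _).
by apply: (@beq_far_comm_low n _ j); rewrite ?pos_word_dec //; lia.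
Qed.

Lemma inc_word_shift n j k : 0 < j < k -> k <= n.-1 ->
  beq n ((j.+1, true) :: inc_word k) (inc_word k ++ [:: (j, true)]).
Proof.
elim: k => [|k IH] /andP [Hj Hjk] Hk //; rewrite inc_wordS.
case: (ltngtP j k) => [Hlt|Hgt|Ejk]; [|lia|].
  rewrite -cat_cons (IH _ (ltnW Hk)); last lia.
  by rewrite -!catA; apply: beq_cat => //; apply: beq_comm; lia.
subst k; case: j Hj IH Hjk Hk => // j _ _ _ Hk; rewrite inc_wordS -!catA /= -cat_cons.
have -> : beq n ((j.+2, true) :: inc_word j) (inc_word j ++ [:: (j.+2, true)]).
  by apply: (@beq_far_comm_low n _ j); rewrite ?pos_word_inc //; lia.
by rewrite -!catA; apply: beq_cat => //=; symmetry; apply: beq_braid; lia.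
Qed.

Lemma Delta_inc n k : k < n -> beq n (Delta k.+1) (inc_word k ++ Delta k).
Proof.
elim: k => [|k IH] Hk //; rewrite {1}DeltaS {1}IH; last lia.
rewrite DeltaS dec_wordS inc_wordS -!catA; apply: beq_cat => //=.
case: k IH Hk => [|k] IH Hk //.
by rewrite -cat1s catA -(@beq_far_comm_low n k.+2 k _ _ _ (pos_word_Delta k.+1)) //; lia.
Qed.

(* [tau M] is the Garside automorphism of [B_M], [Z Delta_M = Delta_M (tau M Z)]. *)
Definition tau (M : nat) (w : word) : word := [seq (M - l.1, l.2) | l <- w].

Lemma pos_word_tau M w : pos_word M.-1 w -> pos_word M.-1 (tau M w).
Proof.
elim: w => // [[i b]] w IH; rewrite !pos_word_cons /= => /and3P [-> Hi /IH ->].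
by rewrite andbT; lia.
Qed.

Lemma tauK M w : pos_word M.-1 w -> tau M (tau M w) = w.
Proof.
elim: w => // [[i b]] w IH; rewrite pos_word_cons => /and3P [_ /= Hi /IH ->].
by congr ((_, _) :: _); lia.
Qed.

Lemma Delta_conj_letter n M j : M <= n -> 0 < j < M ->
  beq n ((j, true) :: Delta M) (Delta M ++ [:: (M - j, true)]).
Proof.
elim: M j => [|M IH] // [|[|j]] HM Hj //.
- rewrite DeltaS; case: M IH HM Hj => [|[|M]] IH HM Hj //.
  rewrite -cat_cons (IH 1) //; last lia.
  rewrite -!catA; apply: (@beq_catl n (Delta M.+2)) => /=.
  by rewrite !subn1 /=; apply: dec_word_shift; lia.
- rewrite (Delta_inc HM) -cat_cons (@inc_word_shift n j.+1 M) //; try lia.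
  rewrite -!catA; apply: (@beq_catl n (inc_word M)) => /=.
  by rewrite subSS; apply: IH; lia.
Qed.

Lemma Delta_conj n M x : M <= n -> pos_word M.-1 x ->
  beq n (x ++ Delta M) (Delta M ++ tau M x).
Proof.
move=> HM; elim: x => [|[i b] x IH]; first by rewrite cats0.
rewrite pos_word_cons => /and3P [/= -> Hi /IH {}IH] /=.
by rewrite IH -cat_cons Delta_conj_letter -?catA //; lia.
Qed.

Lemma Delta_rotate n M u v : M <= n -> pos_word M.-1 u -> pos_word M.-1 v ->
  beq n (Delta M) (u ++ v) -> beq n (Delta M) (v ++ tau M u).
Proof.
move=> HM Hu Hv H; apply: (@beq_cat2l n u); first by apply: pos_word_valid Hu; lia.
by rewrite catA -H Delta_conj.
Qed.

(** * Coxeter words *)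

(* Coxeter words: [sigma_k] comes after [sigma_(k-1)] iff [b k]; [b 1] is irrelevant. *)
Fixpoint cox (b : nat -> bool) (m : nat) : word :=
  if m is m'.+1 then
    if b m then cox b m' ++ [:: (m, true)] else (m, true) :: cox b m'
  else [::].

Lemma coxS b m :
  cox b m.+1 = if b m.+1 then cox b m ++ [:: (m.+1, true)] else (m.+1, true) :: cox b m.
Proof. by []. Qed.

Arguments cox : simpl never.

Lemma pos_word_cox b m : pos_word m (cox b m).
Proof.
elim: m => // m IH; have := pos_word_mono (leqnSn m) IH.
by rewrite coxS; case: (b m.+1); rewrite ?pos_word_cat pos_word_cons /= leqnn => ->.
Qed.

Lemma size_cox b m : size (cox b m) = m.
Proof. by elim: m => // m IH; rewrite coxS; case: (b m.+1); rewrite ?size_cat /= IH ?addn1. Qed.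

Lemma eq_cox b b' m : {in [pred k | 1 < k <= m], b =1 b'} -> cox b m = cox b' m.
Proof.
elim: m => [|[|m] IH] Hb //; first by rewrite !coxS; case: (b 1); case: (b' 1).
rewrite coxS [RHS]coxS Hb ?inE; last lia.
by rewrite IH // => k; rewrite inE => Hk; apply: Hb; rewrite inE; lia.
Qed.

Definition set_bit (b : nat -> bool) (a : nat) (v : bool) : nat -> bool :=
  fun k => if k == a then v else b k.

Lemma cox_set_bit_top b m v :
  cox (set_bit b m.+1 v) m.+1 =
  if v then cox b m ++ [:: (m.+1, true)] else (m.+1, true) :: cox b m.
Proof.
rewrite coxS /set_bit eqxx (@eq_cox _ b) // => k; rewrite inE => Hk.
by case: eqP => // Ek; lia.
Qed.

Lemma Delta_suffix n M u v : M <= n -> pos_word M.-1 u -> pos_word M.-1 v ->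
  beq n (Delta M) (u ++ v) -> beq n (Delta M) (tau M v ++ u).
Proof.
move=> HM Hu Hv /(Delta_rotate HM Hu Hv) /(Delta_rotate HM Hv (pos_word_tau Hu)).
by move/(Delta_rotate HM (pos_word_tau Hu) (pos_word_tau Hv)); rewrite tauK.
Qed.

(* [Delta_(m+2)] is [Delta_(m+1) sigma_(m+1) ... sigma_1] and also
   [sigma_1 ... sigma_(m+1) Delta_(m+1)]; the extra factors are rotated to the right. *)
Lemma cox_prefix_Delta n b m : m < n ->
  exists2 y, pos_word m y & beq n (Delta m.+1) (cox b m ++ y).
Proof.
elim: m => [|m IH] Hm; first by exists [::].
have [y Hy HDy] := IH (ltnW Hm).
have Hc := pos_word_cox b m.
have mono := pos_word_mono (leqnSn m).
rewrite coxS; case: (b m.+1).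
- have HDy' := Delta_suffix (ltnW Hm) Hc Hy HDy.
  have HD : beq n (Delta m.+2) (tau m.+1 y ++ (cox b m ++ (m.+1, true) :: dec_word m)).
    by rewrite DeltaS HDy' dec_wordS -catA.
  have Hty : pos_word m.+1 (tau m.+1 y) := mono _ (@pos_word_tau m.+1 _ Hy).
  have Hv : pos_word m.+1 (cox b m ++ (m.+1, true) :: dec_word m).
    by rewrite pos_word_cat pos_word_cons (mono _ Hc) (mono _ (pos_word_dec m)) /= leqnn.
  exists (dec_word m ++ tau m.+2 (tau m.+1 y)).
    by rewrite pos_word_cat (mono _ (pos_word_dec m)) (@pos_word_tau m.+2).
  by rewrite (Delta_rotate Hm Hty Hv HD) -!catA.
- have HD : beq n (Delta m.+2) (inc_word m ++ ((m.+1, true) :: cox b m ++ y)).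
    by rewrite Delta_inc // HDy inc_wordS -catA.
  have Hi : pos_word m.+1 (inc_word m) := mono _ (pos_word_inc m).
  have Hv : pos_word m.+1 ((m.+1, true) :: cox b m ++ y).
    by rewrite pos_word_cons pos_word_cat (mono _ Hc) (mono _ Hy) /= leqnn.
  exists (y ++ tau m.+2 (inc_word m)).
    by rewrite pos_word_cat (mono _ Hy) (@pos_word_tau m.+2).
  by rewrite (Delta_rotate Hm Hi Hv HD) /= -catA.
Qed.

Lemma beq_top_comm n m y : 0 < m < n.-1 -> all (fun l => l.2) y ->
  {subset map fst y <= iota 1 m} -> m \notin map fst y ->
  beq n ((m.+1, true) :: y) (y ++ [:: (m.+1, true)]).
Proof.
move=> Hm Hy Hsub Hnot; apply: (@beq_far_comm n m.+1 1 m.-1 y); try lia.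
apply/allP => l Hl; rewrite (allP Hy) //=.
have Hl1 : l.1 \in map fst y by apply: map_f.
have := Hsub _ Hl1; rewrite mem_iota => Hr.
have : l.1 != m by apply: contraNneq Hnot => <-.
by move: (l.1) Hr => z; lia.
Qed.

Lemma cox_of_perm n m u : m <= n.-1 -> all (fun l => l.2) u ->
  perm_eq (map fst u) (iota 1 m) -> exists b, beq n u (cox b m).
Proof.
elim: m u => [|m IH] u Hm Hu Hperm.
  by exists predT; move/perm_size: Hperm; case: u {Hu}.
have : m.+1 \in map fst u by rewrite (perm_mem Hperm) mem_iota; lia.
case/mapP => -[i s] Hl /= Ei; subst i.
case/splitPr: Hl Hu Hperm => x y.
rewrite iota1S -cats1 all_cat map_cat /= => /and3P [Hx -> Hy] Hperm.
have Hperm' : perm_eq (map fst (x ++ y)) (iota 1 m).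
  by rewrite -(perm_cons m.+1) map_cat (perm_catCA [:: m.+1]) (permPl Hperm) perm_catC.
have [b Hb] := IH (x ++ y) (ltnW Hm) ltac:(by rewrite all_cat Hx Hy) Hperm'.
have Hdisj : ~~ has (mem (map fst x)) (map fst y).
  by move/perm_uniq: Hperm'; rewrite iota_uniq map_cat cat_uniq => /and3P [].
have Hsub z : z \in map fst x ++ map fst y -> z \in iota 1 m.
  by rewrite -map_cat (perm_mem Hperm').
case: (posnP m) => [Em|Hm0].
  subst m; exists b; move/perm_size: Hperm'; rewrite size_map size_cat /=.
  by move/eqP; rewrite addn_eq0 !size_eq0 => /andP [/eqP -> /eqP ->]; rewrite coxS; case: (b 1).
have : m \in map fst x ++ map fst y by rewrite -map_cat (perm_mem Hperm') mem_iota; lia.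
rewrite mem_cat => /orP [HmX|HmY].
- exists (set_bit b m.+1 true); rewrite cox_set_bit_top -Hb.
  rewrite (@beq_top_comm n m y) ?catA //; first lia.
  + by move=> z Hz; apply: Hsub; rewrite mem_cat Hz orbT.
  + by apply: contra Hdisj => HmY; apply/hasP; exists m.
- exists (set_bit b m.+1 false); rewrite cox_set_bit_top -Hb -cat_cons.
  rewrite (@beq_top_comm n m x) -?catA //; first lia.
  + by move=> z Hz; apply: Hsub; rewrite mem_cat Hz.
  + by apply: contra Hdisj => HmX; apply/hasP; exists m.
Qed.

Lemma conjugate_refl n X : conjugate n X X.
Proof. by exists [::]; rewrite /= cats0. Qed.

Lemma conjugate_trans n X Y Z : conjugate n X Y -> conjugate n Y Z -> conjugate n X Z.
Proof.
move=> [w1 [V1 H1]] [w2 [V2 H2]]; exists (w1 ++ w2).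
by rewrite valid_cat V1 V2 H2 H1 winv_cat -!catA.
Qed.

#[export] Instance conjugate_beq n : Proper (beq n ==> beq n ==> iff) (conjugate n).
Proof.
move=> X X' HX Y Y' HY; split=> -[w [Vw H]]; exists w; split=> //.
  by rewrite -HX -HY.
by rewrite HX HY.
Qed.

Lemma conjugate_rotate n u v : valid n u -> conjugate n (u ++ v) (v ++ u).
Proof. by move=> Vu; exists u; split=> //; rewrite -catA catA beq_catVw. Qed.

Lemma beq_far_comm_words n lo hi u v : 0 < lo -> hi.+2 <= n ->
  all (fun l => l.2 && (lo <= l.1 <= hi)) u ->
  all (fun l => l.2 && (hi.+2 <= l.1 <= n.-1)) v -> beq n (v ++ u) (u ++ v).
Proof.
move=> Hlo Hhi Hu; elim: v => [|[i b] v IH] /=; first by rewrite cats0.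
move=> /andP [/andP [/= -> Hi] /IH {}IH].
rewrite IH -cat_cons (@beq_far_comm n i lo hi u) -?catA //; lia.
Qed.

Definition dec_range (a d : nat) : word := [seq (i, true) | i <- rev (iota a.+1 d)].

Lemma dec_rangeS a d : dec_range a d.+1 = (a + d.+1, true) :: dec_range a d.
Proof. by rewrite /dec_range -[d.+1]addn1 iotaD rev_cat /= addn1 addSnnS. Qed.

Lemma dec_range_letters a d : all (fun l => l.2 && (a.+1 <= l.1 <= a + d)) (dec_range a d).
Proof.
elim: d => [|d IH] //; rewrite dec_rangeS /=; apply/andP; split; first lia.
by apply: sub_all IH => l /and3P [-> ? ?] /=; lia.
Qed.

Lemma cox_high b a d : (forall k, a < k <= a + d -> b k = false) ->
  cox b (a + d) = dec_range a d ++ cox b a.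
Proof.
elim: d => [|d IH] Hb; first by rewrite addn0.
rewrite addnS coxS Hb; last lia.
by rewrite IH ?dec_rangeS ?addnS // => k Hk; apply: Hb; lia.
Qed.

(* Moving [sigma_a] from the left to the right of [sigma_(a-1)]: rotate the block
   [sigma_(a+d) ... sigma_(a+1)] away, which commutes with [sigma_1 ... sigma_(a-1)]. *)
Lemma conjugate_cox_flip n (b : nat -> bool) a d : 1 < a -> a + d <= n.-1 -> b a ->
  (forall k, a < k <= a + d -> b k = false) ->
  conjugate n (cox (set_bit b a false) (a + d)) (cox b (a + d)).
Proof.
case: a => // a Ha Had Hba Hhi.
have Hhi' k : a.+1 < k <= a.+1 + d -> set_bit b a.+1 false k = false.
  by move=> Hk; rewrite /set_bit; case: eqP => // _; apply: Hhi.
rewrite (cox_high Hhi') (cox_high Hhi) cox_set_bit_top coxS Hba.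
set H := dec_range _ _; set C := cox b a.
have VH : valid n H by apply: sub_all (dec_range_letters a.+1 d) => l /andP [_]; lia.
apply: conjugate_trans (conjugate_rotate _ VH) _.
rewrite /= -(@beq_far_comm_words n 1 a C H) //; try lia.
- by rewrite catA; apply: (@conjugate_rotate n [:: (a.+1, true)]); rewrite /valid /=; lia.
- by apply: sub_all (pos_word_cox b a) => l /and3P [-> ? ?]; lia.
- by apply: sub_all (dec_range_letters a.+1 d) => l /andP [-> ?]; lia.
Qed.

(* The bits of [b] are switched on one at a time, from the bottom up. *)
Lemma conjugate_cox n b m : m <= n.-1 -> conjugate n (cox xpred0 m) (cox b m).
Proof.
move=> Hm; pose bk k j := (j <= k) && b j.
suff Hk k : k <= m -> conjugate n (cox xpred0 m) (cox (bk k) m).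
  rewrite (@eq_cox b (bk m)); first exact: Hk.
  by move=> j; rewrite inE /bk => /andP [_ ->].
elim: k => [|k IH] Hk.
  rewrite (@eq_cox (bk 0) xpred0); first exact: conjugate_refl.
  by move=> j; rewrite inE /bk; lia.
apply: conjugate_trans (IH (ltnW Hk)) _.
have [Hflip|Hsame] := boolP ((0 < k) && b k.+1).
  have := @conjugate_cox_flip n (bk k.+1) k.+1 (m - k.+1).
  rewrite subnKC // (@eq_cox _ (bk k)); first by apply; rewrite /bk ?leqnn //; lia.
  move=> j; rewrite inE /set_bit /bk => Hj.
  by case: eqP => [->|Hne]; rewrite ?ltnn //; congr (_ && _); lia.
rewrite (@eq_cox (bk k.+1) (bk k)); first exact: conjugate_refl.
move=> j; rewrite inE /bk => Hj.
case: (eqVneq j k.+1) => [Ej|Hne]; last by congr (_ && _); lia.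
by subst j; move: Hsame; rewrite ltnn leqnn; case: (b k.+1); rewrite ?andbT //; lia.
Qed.

Lemma delta_cox n : delta n = cox xpred0 n.-1.
Proof.
by rewrite /delta; elim: n.-1 => [|m IH] //; rewrite coxS -IH iota1S rev_rcons.
Qed.

Lemma wperm_pos_word_fix m w x : pos_word m w -> (x == 0) || (m.+1 < x) -> wperm w x = x.
Proof.
elim: w x => // l w IH x; rewrite pos_word_cons => /and3P [_ Hl Hw] Hx.
have Ex : swap l.1 x = x by move: Hl Hx; set i := l.1; swap_cases.
by rewrite wperm_cons Ex IH.
Qed.

Lemma wperm_cox_top b m : 0 < m -> wperm (cox b m) m.+1 < m.+1.
Proof.
elim: m => [|[|m] IH] // _; first by rewrite coxS; case: (b 1).
rewrite coxS; case: (b m.+2); rewrite ?wperm_cat ?wperm_cons /=.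
  by rewrite (@wperm_pos_word_fix m.+1 _ m.+3) ?pos_word_cox //; swap_cases.
have -> : swap m.+2 m.+3 = m.+2 by swap_cases.
exact: ltnW (IH _).
Qed.

Lemma wperm_cox_up b m k : 1 < k <= m -> (k < wperm (cox b m) k) = ~~ b k.
Proof.
elim: m k => [|m IH] k Hk; first lia.
have Hc := pos_word_cox b m.
have Hrange x : 0 < x <= m.+1 -> 0 < wperm (cox b m) x <= m.+1.
  by apply: wperm_range; apply: pos_word_valid Hc.
rewrite coxS; case Eb: (b m.+1); rewrite ?wperm_cat ?wperm_cons /=.
- have [Hkm|Ek] : k <= m \/ k = m.+1 by lia.
    have := Hrange k; rewrite -(IH k) //; last lia.
    by set y := wperm _ k; swap_cases.
  subst k; have Hm : 0 < m by lia.
  by have := wperm_cox_top b Hm; set y := wperm _ m.+1; swap_cases.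
- have [Hkm|Ek] : k <= m \/ k = m.+1 by lia.
    have -> : swap m.+1 k = k by swap_cases.
    by rewrite IH //; lia.
  subst k; have -> : swap m.+1 m.+1 = m.+2 by swap_cases.
  by rewrite (wperm_pos_word_fix Hc) //; lia.
Qed.

Lemma cox_inj n b b' : beq n (cox b n.-1) (cox b' n.-1) ->
  {in [pred k | 1 < k <= n.-1], b =1 b'}.
Proof.
move=> /beq_wperm H k; rewrite inE => Hk.
by apply: negb_inj; rewrite -!(@wperm_cox_up _ n.-1) // H.
Qed.

(** * Conjugates of delta *)

Lemma wperm_dec_word k x :
  wperm (dec_word k) x = if 0 < x <= k then x.+1 else if x == k.+1 then 1 else x.
Proof.
elim: k x => [|k IH] x.
  have -> : (0 < x <= 0) = false by lia.
  by case: eqP => [->|].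
rewrite dec_wordS wperm_cons IH /=.
by case: (boolP (0 < x <= k.+1)); case: (boolP (0 < swap k.+1 x <= k)); swap_cases.
Qed.

Lemma wperm_delta_transitive n x y : 0 < x <= n -> 0 < y <= n ->
  exists k, iter k (wperm (delta n)) x = y.
Proof.
move=> Hx Hy; set f := wperm (delta n).
have Hup t z : 0 < z -> z + t <= n -> iter t f z = z + t.
  elim: t z => [|t IHt] z Hz Hzt /=; first by rewrite addn0.
  by rewrite IHt; [rewrite /f wperm_dec_word; case: ifP; lia | lia | lia].
have Htop : f n = 1.
  rewrite /f wperm_dec_word ifF; last lia.
  by rewrite prednK ?eqxx //; lia.
exists (y.-1 + (n - x).+1); rewrite iterD iterS (Hup _ x) ?subnKC; try lia.
by rewrite Htop Hup; lia.
Qed.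

Lemma iter_wperm_conj n u v w k x : valid n w -> beq n u (winv w ++ v ++ w) ->
  iter k (wperm u) x = wperm w (iter k (wperm v) (wperm (winv w) x)).
Proof.
move=> Vw Hu; have Hinv y : wperm (winv w) (wperm w y) = y.
  by rewrite -wperm_cat (beq_wperm (beq_catwV Vw)).
elim: k => [|k IH] /=.
  by rewrite -wperm_cat (beq_wperm (beq_catVw Vw)).
by rewrite IH (beq_wperm Hu) !wperm_cat Hinv.
Qed.

(* A braid without [sigma_j] has a permutation preserving [{1, ..., j}], while
   the permutation of [delta] is an [n]-cycle. *)
Lemma conjugate_delta_letters n u : valid n u -> conjugate n (delta n) u ->
  {subset iota 1 n.-1 <= map fst u}.
Proof.
move=> Vu [w [Vw Hu]] j; rewrite mem_iota => Hj; apply/negPn/negP => Hnot.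
have Hav : all (fun l => (0 < l.1) && (l.1 != j)) u.
  apply/allP => l Hl; move/allP: Vu => /(_ l Hl) /andP [-> _] /=.
  by apply: contraNneq Hnot => <-; apply: map_f.
have Hstay k : 0 < iter k (wperm u) 1 <= j.
  by elim: k => [|k IHk] /=; [lia | exact: wperm_avoid].
have Vw' : valid n (winv w) by rewrite valid_winv.
have [x Hx] : 0 < 1 <= n /\ 0 < n <= n by lia.
have [k Hk] := wperm_delta_transitive (wperm_range Vw' x) (wperm_range Vw' Hx).
have := Hstay k; rewrite (iter_wperm_conj _ _ Vw Hu) Hk -wperm_cat.
by rewrite (beq_wperm (beq_catVw Vw)) /=; lia.
Qed.

(** * Normal forms of Coxeter words *)

Lemma mulz_nat_cases (p : int) (N : nat) :
  [\/ p = 0%R, (1 <= p /\ N%:Z <= p * N)%R | (p <= -1 /\ p * N <= - N%:Z)%R].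
Proof.
have [Hp|[Hp|Hp]] : (p = 0 \/ 1 <= p \/ p <= -1)%R by lia.
- exact: Or31.
- have : (0 <= (p - 1) * N)%R by apply: mulr_ge0; lia.
  by move=> ?; apply: Or32; lia.
- have : (0 <= (- p - 1) * N)%R by apply: mulr_ge0; lia.
  by move=> ?; apply: Or33; lia.
Qed.

Lemma size_DeltaS k : size (Delta k.+1) = size (Delta k) + k.
Proof. by rewrite DeltaS size_cat size_dec_word. Qed.

Lemma size_Delta2 : size (Delta 2) = 1.
Proof. by rewrite !size_DeltaS. Qed.

Lemma size_Delta_ge n : 3 <= n -> n <= size (Delta n).
Proof.
elim: n => // n IH Hn; rewrite size_DeltaS.
by case: (eqVneq n 2) => [->|Hn2]; [rewrite size_Delta2 | have := IH ltac:(lia); lia].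
Qed.

Lemma expsum_Delta n : expsum (Delta n) = size (Delta n).
Proof. exact/expsum_positive/(pos_word_positive (pos_word_Delta n)). Qed.

Lemma expsum_Deltapow n p : expsum (Deltapow n p) = (p * size (Delta n))%R.
Proof.
have Enseq k w : expsum (flatten (nseq k w)) = (k%:Z * expsum w)%R.
  by elim: k => [|k IH] /=; rewrite ?mul0r // expsum_cat IH; lia.
by case: p => k /=; rewrite ?expsum_cat !Enseq ?expsum_winv expsum_Delta ?NegzE; lia.
Qed.

Lemma expsum_cox b m : expsum (cox b m) = m.
Proof. by rewrite expsum_positive ?size_cox // (pos_word_positive (pos_word_cox b m)). Qed.

Lemma expsum_conjugate n X Y : conjugate n X Y -> expsum Y = expsum X.
Proof. by move=> [w [_ ->]]; rewrite !expsum_cat expsum_winv; lia. Qed.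

Lemma expsum_simple n y : simple n y -> ~ beq n y [::] -> ~ beq n y (Delta n) ->
  (1 <= expsum y)%R /\ (expsum y < size (Delta n))%R.
Proof.
move=> [Vy [Py HyD]] Hy1 HyD'; have Hge := positive_expsum_ge0 Py.
have := positive_expsum_ge0 HyD; rewrite expsum_cat expsum_winv expsum_Delta => Hle.
split; first by case: (eqVneq (expsum y) 0%R) => [/(positive_expsum0 Py)/Hy1 | ] //; lia.
case: (eqVneq (expsum y) (size (Delta n))) => [Ey|]; last lia.
have /(positive_expsum0 HyD) HD : expsum (winv y ++ Delta n) = 0%R.
  by rewrite expsum_cat expsum_winv expsum_Delta Ey; lia.
by case: HyD'; rewrite -[y]cats0 -HD catA beq_catwV.
Qed.

Lemma expsum_factors_ge n ys :
  (forall y, y \in ys -> simple n y /\ ~ beq n y [::] /\ ~ beq n y (Delta n)) ->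
  (Posz (size ys) <= expsum (flatten ys))%R.
Proof.
elim: ys => [|y ys IH] Hys //=; rewrite expsum_cat.
have [Sy [Hy1 HyD]] := Hys y (mem_head _ _).
have [Hy _] := expsum_simple Sy Hy1 HyD.
have := IH (fun z Hz => Hys z ltac:(by rewrite inE Hz orbT)).
by move: Hy; move: (expsum y) (expsum (flatten ys)) (size ys) => e s k; lia.
Qed.

Lemma cox_simple n b : 2 <= n -> simple n (cox b n.-1).
Proof.
move=> Hn; have Hc := pos_word_cox b n.-1.
have Vc : valid n (cox b n.-1) := pos_word_valid (leqnn _) Hc.
have [y Hy HD] := @cox_prefix_Delta n b n.-1 ltac:(lia); rewrite prednK in HD; last lia.
split; [done | split; [by exists (cox b n.-1); rewrite (pos_word_positive Hc) |]].
exists y; rewrite (pos_word_valid _ Hy) ?(pos_word_positive Hy) //.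
by rewrite HD catA beq_catVw.
Qed.

Lemma cox_nontrivial n b : 3 <= n -> ~ beq n (cox b n.-1) [::] /\ ~ beq n (cox b n.-1) (Delta n).
Proof.
move=> Hn; have := size_Delta_ge Hn.
by split=> /beq_expsum; rewrite expsum_cox ?expsum_Delta /=; lia.
Qed.

Lemma NF_cox n b : 3 <= n -> NF n (cox b n.-1) 0 [:: cox b n.-1].
Proof.
move=> Hn; have HN := size_Delta_ge Hn.
split; [by rewrite /= cats0 | split; [|split]].
- move=> q /positive_expsum_ge0; rewrite expsum_cat expsum_Deltapow expsum_cox; nia.
- by move=> y; rewrite inE => /eqP ->; split; [apply: cox_simple; lia | apply: cox_nontrivial].
- by move=> [|i] // _ t _; rewrite /= cats0.
Qed.

Lemma NF_cox2 b : NF 2 (cox b 1) 1 [::].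
Proof.
split; [by rewrite coxS; case: (b 1) | split => //].
by move=> q /positive_expsum_ge0; rewrite expsum_cat expsum_Deltapow expsum_cox size_Delta2; lia.
Qed.

Lemma canlen_cox n b : 2 <= n -> canlen n (cox b n.-1) (2 < n).
Proof.
move=> Hn; case: (ltnP 2 n) => Hn2.
  by exists 0%R, [:: cox b n.-1]; split => //; apply: NF_cox.
have En : n = 2 by lia.
by subst n; exists 1%R, [::]; split => //; apply: NF_cox2.
Qed.

(* The first factor of the normal form absorbs the simple prefix [cox b n.-1],
   which already carries the whole exponent sum. *)
Lemma canlen_cox_le n b r : 2 <= n -> canlen n (cox b n.-1) r -> r <= (2 < n).
Proof.
move=> Hn [p [ys [[HY [Hmax [Hys Hleft]]] <-]]].
have Hp : (0 <= p)%R by apply: Hmax; rewrite oppr0 /=; case: (cox_simple b Hn) => _ [].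
have Hge := expsum_factors_ge Hys.
have /beq_expsum := HY; rewrite expsum_cat expsum_Deltapow expsum_cox => Hes.
case: (ltnP 2 n) => Hn2; last first.
  have En : n = 2 by lia.
  subst n; case: ys Hys {Hleft HY Hes Hge} => // y ys Hys.
  have [Sy [Hy1 HyD]] := Hys y (mem_head _ _).
  by have := expsum_simple Sy Hy1 HyD; rewrite size_Delta2; move: (expsum y) => e; lia.
have HN := size_Delta_ge Hn2.
have Ep : p = 0%R.
  case: (mulz_nat_cases p (size (Delta n))) => // -[? ?];
    by move: Hge Hes; move: (expsum _) (size ys) => s k; lia.
subst p; case: ys Hys Hleft HY Hes Hge => [|y1 ys] // Hys Hleft /= HY Hes _.
have Hpre : Defs.prefix n (cox b n.-1) y1.
  apply: (Hleft 0 isT _ (cox_simple b Hn)).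
  rewrite /Defs.prefix drop0 -[flatten _]/(y1 ++ flatten ys) -HY.
  by rewrite beq_catVw ?(pos_word_valid _ (pos_word_cox b _)) //; exists [::].
have := positive_expsum_ge0 Hpre; rewrite expsum_cat expsum_winv expsum_cox.
have := @expsum_factors_ge n ys (fun z Hz => Hys z ltac:(by rewrite inE Hz orbT)).
move: Hes; rewrite /= expsum_cat; move: (expsum y1) (expsum (flatten ys)) (size ys) => e s k.
lia.
Qed.

Lemma canlen_conjugate_delta_gt0 n Z r : 3 <= n -> conjugate n (delta n) Z ->
  canlen n Z r -> 0 < r.
Proof.
move=> Hn HZ [p [[|y ys] [[HY _] <-]]] //.
have := HY; move/beq_expsum; rewrite (expsum_conjugate HZ) delta_cox expsum_cox.
rewrite cats0 expsum_Deltapow; have := size_Delta_ge Hn.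
by case: (mulz_nat_cases p (size (Delta n))) => [->|[? ?]|[? ?]]; lia.
Qed.

(** * The ultra summit set of delta *)

Lemma cox_USS n b : 2 <= n -> USS n (delta n) (cox b n.-1).
Proof.
move=> Hn; split; first exact: pos_word_valid (pos_word_cox b _).
split; first by rewrite delta_cox; apply: conjugate_cox.
split.
  move=> Z r r' _ HZ /(canlen_cox_le Hn) Hr Hr'.
  by case: (ltnP 2 n) Hr => [Hn2|] Hr; [have := canlen_conjugate_delta_gt0 Hn2 HZ Hr' | ]; lia.
exists 1; split => //; exists (cox b n.-1); split; first exact: pos_word_valid (pos_word_cox b _).
split => //; case: (ltnP 2 n) => Hn2.
  by exists 0%R, [:: cox b n.-1]; split; [apply: NF_cox | rewrite /= cats0].
have En : n = 2 by lia.
by subst n; exists 1%R, [::]; split; [apply: NF_cox2 |].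
Qed.

Lemma USS_delta_positive n Y : 2 <= n -> USS n (delta n) Y ->
  exists2 u, all (fun l => l.2) u /\ valid n u & beq n Y u.
Proof.
move=> Hn [_ [HY [Hmin [[|m] [// _ [W [_ [[p [ys [HNF _]]] _]]]]]]]].
have Vdelta : valid n (delta n) by rewrite delta_cox; apply: pos_word_valid (pos_word_cox _ _).
have Ldelta : canlen n (delta n) (2 < n) by rewrite delta_cox; apply: canlen_cox.
have Hlen : canlen n Y (size ys) by exists p, ys.
have Hle := Hmin _ _ _ Vdelta (conjugate_refl n (delta n)) Hlen Ldelta.
move: HNF => [HYys [_ [Hys _]]].
have := HYys => /beq_expsum; rewrite (expsum_conjugate HY) delta_cox expsum_cox.
rewrite expsum_cat expsum_Deltapow => Hes.
case: (ltnP 2 n) Hle => Hn2 Hle; last first.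
  have En : n = 2 by lia.
  subst n; case: ys Hle HYys Hes {Hys Hlen} => // _ HYys.
  rewrite size_Delta2 /= => Hes; have Ep : p = 1%R by lia.
  by exists (Delta 2) => //; rewrite HYys Ep.
have Hpos := canlen_conjugate_delta_gt0 Hn2 HY Hlen.
case: ys Hys HYys Hes Hle Hpos {Hlen} => [|y [|]] // Hys HYys; rewrite /= cats0 => Hes _ _.
have [Sy [Hy1 HyD]] := Hys y (mem_head _ _).
have Ep : p = 0%R.
  have := expsum_simple Sy Hy1 HyD; have := size_Delta_ge Hn2.
  case: (mulz_nat_cases p (size (Delta n))) => // -[? ?];
    by move: Hes; move: (expsum y) => e; lia.
move: Sy HYys => [_ [[u [Vu [Pu Hu]]] _]]; rewrite Ep /= cats0 => HYy.
by exists u => //; rewrite HYy.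
Qed.

(* A positive representative has [n - 1] letters, all distinct by
   [conjugate_delta_letters]; so it is a Coxeter word. *)
Lemma USS_delta_cox n Y : 2 <= n -> USS n (delta n) Y -> exists b, beq n Y (cox b n.-1).
Proof.
move=> Hn HYU; have [u [Pu Vu] HYu] := USS_delta_positive Hn HYU.
have HYc : conjugate n (delta n) u by rewrite -HYu; case: HYU => _ [].
have Hsize : size u = n.-1.
  by have := expsum_conjugate HYc; rewrite delta_cox expsum_cox expsum_positive //; lia.
have Hsub := conjugate_delta_letters Vu HYc.
have Huniq : uniq (map fst u).
  by apply: leq_size_uniq (iota_uniq 1 n.-1) Hsub _; rewrite size_map size_iota Hsize.
have Hperm : perm_eq (map fst u) (iota 1 n.-1).
  apply: uniq_perm Huniq (iota_uniq _ _) _ => j; apply/idP/idP; last exact: Hsub.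
  by case/mapP => l /(allP Vu) /andP [H1 H2] ->; rewrite mem_iota; lia.
have [b Hb] := cox_of_perm (leqnn _) Pu Hperm.
by exists b; rewrite HYu.
Qed.

Lemma card_Bn_param n (P : word -> Prop) (T : finType) (F : T -> word) :
  (forall t, valid n (F t) /\ P (F t)) ->
  (forall s t, beq n (F s) (F t) -> s = t) ->
  (forall Y, valid n Y -> P Y -> exists t, beq n Y (F t)) ->
  card_Bn n P #|T|.
Proof.
move=> HF Finj Fsurj; exists (codom F); rewrite size_codom.
have Enth i (Hi : i < #|T|) : nth [::] (codom F) i = F (enum_val (Ordinal Hi)).
  exact: (nth_codom _ _ (Ordinal Hi)).
split=> //; split; first by move=> i Hi; rewrite Enth.
split; first by move=> i j Hi Hj; rewrite !Enth => /Finj /enum_val_inj [].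
move=> Y VY PY; have [t Ht] := Fsurj Y VY PY.
by exists (enum_rank t); rewrite (nth_codom _ _ (enum_rank t)) enum_rankK.
Qed.

(* Bit [i] of the tuple records whether [sigma_(i+2)] comes after [sigma_(i+1)]. *)
Definition cox_of_bits n (t : (n - 2).-tuple bool) : word :=
  cox (fun k => nth false t (k - 2)) n.-1.

Lemma cox_of_bits_inj n (s t : (n - 2).-tuple bool) :
  beq n (cox_of_bits s) (cox_of_bits t) -> s = t.
Proof.
move=> /cox_inj Hst; apply: eq_from_tnth => i; rewrite !(tnth_nth false).
have := Hst i.+2; rewrite inE !subSS subn0; apply.
by have := ltn_ord i; lia.
Qed.

Lemma cox_of_bitsP n b : cox b n.-1 = cox_of_bits [tuple b i.+2 | i < n - 2].
Proof.
apply: eq_cox => k; rewrite inE => Hk.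
have Hk' : k - 2 < n - 2 by lia.
by rewrite (nth_mktuple _ _ (Ordinal Hk')) /=; congr b; lia.
Qed.

Theorem corollary12 (n : nat) : 2 <= n -> card_Bn n (USS n (delta n)) (2 ^ (n - 2)).
Proof.
move=> Hn; have -> : 2 ^ (n - 2) = #|{: (n - 2).-tuple bool}| by rewrite card_tuple card_bool.
apply: (@card_Bn_param _ _ _ (@cox_of_bits n)) => [t | s t | Y _].
- by split; [apply: pos_word_valid (pos_word_cox _ _) | apply: cox_USS].
- exact: cox_of_bits_inj.
- by move/(USS_delta_cox Hn) => [b HY]; exists [tuple b i.+2 | i < n - 2]; rewrite HY cox_of_bitsP.
Qed.
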